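(* Let $m\ge 3$, $n=2m$, $\tau(v)=n+1-v$ for $v\in[n]$, and let $G$ be a graph on $[n]$ such that every $3$-set $S\subseteq[n]$ satisfies $|E(G[S])|+|E(G[\tau(S)])|\ge 2$. Define the graph $W$ on $[m]$ by: $\{i,j\}$ is an edge of $W$ iff there is exactly one edge of $G$ with one endpoint in $\{i,\tau(i)\}$ and the other in $\{j,\tau(j)\}$. If $i,j,k\in[m]$ are distinct with $j,k\in N_W(i)$, then there are at least $3$ edges of $G$ with one endpoint in $\{j,\tau(j)\}$ and the other in $\{k,\tau(k)\}$. In particular $W$ is triangle-free.
   Context: $G[A]$ is the induced subgraph on $A$; $N_W(i)$ is the set of neighbours of $i$ in $W$. *)

From mathcomp Require Import all_boot.
Set Implicit Arguments. Unset Strict Implicit. Unset Printing Implicit Defensive.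

(* Vertex set [n] = {1,...,n} is modelled 0-indexed as 'I_n; vertex v (1-indexed)
   corresponds to the ordinal v-1.  Then tau(v) = n+1-v becomes rev_ord : v |-> n-1-v. *)
Definition tau (n : nat) (v : 'I_n) : 'I_n := rev_ord v.

Definition induced_edges (n : nat) (G : rel 'I_n) (S : {set 'I_n}) : nat :=
  #|[set p : 'I_n * 'I_n | [&& p.1 \in S, p.2 \in S, (p.1 < p.2)%N & G p.1 p.2]]|.

(* number of (ordered) pairs (x,y) with x in A, y in B, xy an edge; for disjoint
   A, B this is the number of edges with one endpoint in A and the other in B. *)
Definition cross_edges (n : nat) (G : rel 'I_n) (A B : {set 'I_n}) : nat :=
  #|[set p : 'I_n * 'I_n | [&& p.1 \in A, p.2 \in B & G p.1 p.2]]|.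

Definition emb (m : nat) (i : 'I_m) : 'I_(m + m) := widen_ord (leq_addr m m) i.

Definition pairset (m : nat) (i : 'I_m) : {set 'I_(m + m)} :=
  [set emb i; tau (emb i)].

Definition Wgraph (m : nat) (G : rel 'I_(m + m)) : rel 'I_m :=
  fun i j => (i != j) && (cross_edges G (pairset i) (pairset j) == 1%N).

From mathcomp Require Import all_boot zify.
Set Implicit Arguments. Unset Strict Implicit. Unset Printing Implicit Defensive.

(* Let xy be the unique G-edge between {i, τi} and {j, τj}, and choose c in
   {k, τk} so that the unique edge between {i, τi} and {k, τk} is xτc or τxc.
   In the triples {x, τy, c} and {τx, y, τc} every pair except τyc and yτc is
   then a non-edge, so the hypothesis forces both of these edges.  In the
   triples {x, τy, τc} and {τx, y, c} at most one of xτc, τxc is an edge, so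
   one of yc, τyτc is an edge as well: three edges between {j, τj} and
   {k, τk}. *)

Lemma cards3 (T : finType) (a b c : T) : a != b -> a != c -> b != c ->
  #|[set a; b; c]| = 3.
Proof. by move=> ab ac bc; rewrite -setUA cardsU1 cards2 !inE negb_or ab ac bc. Qed.

Section EdgeCounts.
Variables (n : nat) (G : rel 'I_n).

Lemma cross_edgesE (A B : {set 'I_n}) :
  cross_edges G A B = \sum_(a in A) \sum_(b in B) G a b.
Proof.
rewrite /cross_edges -sum1_card pair_big_dep big_mkcond [RHS]big_mkcond /=.
apply: eq_bigr => -[a b] _; rewrite !inE /=.
by case: (a \in A); case: (b \in B); case: (G a b).
Qed.

Lemma cross_edges_gt0 (A B : {set 'I_n}) :
  0 < cross_edges G A B -> exists x y, [/\ x \in A, y \in B & G x y].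
Proof. by case/card_gt0P => -[x y]; rewrite inE => /and3P[]; exists x, y. Qed.

Lemma cross_edges2 (a a' b b' : 'I_n) : a != a' -> b != b' ->
  cross_edges G [set a; a'] [set b; b'] = G a b + G a b' + G a' b + G a' b'.
Proof.
move=> aa' bb'.
rewrite cross_edgesE !big_setU1 ?inE //= !big_set1 !big_setU1 ?inE //= !big_set1.
by rewrite addnA.
Qed.

Hypotheses (Gsym : symmetric G) (Girr : irreflexive G).

Lemma double_induced_edges (S : {set 'I_n}) :
  (induced_edges G S).*2 = cross_edges G S S.
Proof.
rewrite /induced_edges; set L := [set p | [&& _, _, _ & _]].
pose swap (p : 'I_n * 'I_n) := (p.2, p.1).
have swapK : involutive swap by case.
have cover : [set p | [&& p.1 \in S, p.2 \in S & G p.1 p.2]] = L :|: swap @: L.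
  apply/setP => -[a b]; rewrite (can_imset_pre _ swapK) !inE /=.
  case: (ltngtP a b) => [||/val_inj ->]; last by rewrite Girr !andbF.
  1,2: by move=> _; rewrite (Gsym b a) /=; case: (a \in S); case: (b \in S); case: (G a b).
have disj : [disjoint L & swap @: L].
  rewrite -setI_eq0 (can_imset_pre _ swapK); apply/eqP/setP => -[a b]; rewrite !inE /=.
  by apply/negP => /andP[/and4P[_ _ + _] /and4P[_ _ + _]] => /ltn_trans h /h; rewrite ltnn.
rewrite /cross_edges cover cardsU (disjoint_setI0 disj) cards0 subn0.
by rewrite card_imset ?addnn //; exact: inv_inj.
Qed.

Lemma induced_edges3 (a b c : 'I_n) : a != b -> a != c -> b != c ->
  induced_edges G [set a; b; c] = G a b + G a c + G b c.
Proof.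
move=> ab ac bc; apply: double_inj; rewrite double_induced_edges cross_edgesE -setUA.
do 2 rewrite !big_setU1 ?inE ?negb_or ?ab ?ac ?bc //= ?big_set1.
rewrite !Girr (Gsym b a) (Gsym c a) (Gsym c b); lia.
Qed.
End EdgeCounts.

Section Pairs.
Variable m : nat.
Implicit Types (i j : 'I_m) (v w : 'I_(m + m)).

Lemma tauK : involutive (@tau (m + m)).
Proof. exact: rev_ordK. Qed.

Lemma tau_neq v : tau v != v.
Proof. by apply/eqP => /(congr1 val) /=; have := ltn_ord v; lia. Qed.

Lemma emb_pairset i : emb i \in pairset i.
Proof. by rewrite !inE eqxx. Qed.

Lemma mem_tau_pairset i v : (tau v \in pairset i) = (v \in pairset i).
Proof. by rewrite !inE -{1}(tauK (emb i)) !(inj_eq (can_inj tauK)) orbC. Qed.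

Lemma pairsetE i v : v \in pairset i -> pairset i = [set v; tau v].
Proof. by rewrite !inE => /orP[] /eqP->; rewrite ?tauK // setUC. Qed.

Lemma pairset_neq i j v w : i != j -> v \in pairset i -> w \in pairset j -> v != w.
Proof.
move=> ij Pv Pw; apply: contraNN ij => /eqP eq_vw; move: Pv Pw; rewrite eq_vw.
have := ltn_ord i; have := ltn_ord j; rewrite !inE => ? ?.
by move=> /orP[] /eqP-> /orP[] /eqP/(congr1 val) /= eq_ij; apply/eqP/ord_inj; lia.
Qed.

Lemma cross_edges_pairset (G : rel 'I_(m + m)) i j v w :
  v \in pairset i -> w \in pairset j ->
  cross_edges G (pairset i) (pairset j) = G v w + G v (tau w) + G (tau v) w + G (tau v) (tau w).
Proof. by move=> /pairsetE-> /pairsetE->; rewrite cross_edges2 // eq_sym tau_neq. Qed.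
End Pairs.

Section Triangle.
Variables (m : nat) (G : rel 'I_(m + m)).
Hypotheses (Gsym : symmetric G) (Girr : irreflexive G).
Hypothesis H3 : forall S : {set 'I_(m + m)}, #|S| = 3 ->
  2 <= induced_edges G S + induced_edges G (@tau (m + m) @: S).

Lemma edges_triple_tau_ge2 (a b c : 'I_(m + m)) : a != b -> a != c -> b != c ->
  2 <= G a b + G a c + G b c + (G (tau a) (tau b) + G (tau a) (tau c) + G (tau b) (tau c)).
Proof.
move=> ab ac bc; have tau_inj := can_inj (@tauK m).
have := H3 (cards3 ab ac bc); rewrite !imsetU !imset_set1.
by rewrite !induced_edges3 // ?(inj_eq tau_inj).
Qed.

Lemma exists_crossed_rep (i k : 'I_m) x : x \in pairset i ->
  cross_edges G (pairset i) (pairset k) = 1 ->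
  exists c, [/\ c \in pairset k, ~~ G x c & ~~ G (tau x) (tau c)].
Proof.
move=> Px; rewrite (cross_edges_pairset _ Px (emb_pairset k)) => Wik.
have [Gk|Gk] := boolP (G x (emb k) || G (tau x) (tau (emb k))).
- exists (tau (emb k)); rewrite mem_tau_pairset tauK emb_pairset.
  by move: Wik Gk; case: (G x _); case: (G x _); case: (G (tau x) _); case: (G (tau x) _).
- by exists (emb k); rewrite emb_pairset; move: Gk; case: (G x _); case: (G (tau x) _).
Qed.

Lemma cross_edges_ge3 (i j k : 'I_m) : i != j -> i != k -> j != k ->
  cross_edges G (pairset i) (pairset j) = 1 ->
  cross_edges G (pairset i) (pairset k) = 1 ->
  3 <= cross_edges G (pairset j) (pairset k).
Proof.
move=> ij ik jk Wij Wik.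
have [x [y [Px Py Gxy]]] : exists x y, [/\ x \in pairset i, y \in pairset j & G x y].
  by apply: cross_edges_gt0; rewrite Wij.
have [c [Pc Gxc Gtxtc]] := exists_crossed_rep Px Wik.
have Pty : tau y \in pairset j by rewrite mem_tau_pairset.
have Ptc : tau c \in pairset k by rewrite mem_tau_pairset.
rewrite (cross_edges_pairset _ Px Py) Gxy in Wij.
rewrite (cross_edges_pairset _ Px Pc) (negbTE Gxc) (negbTE Gtxtc) in Wik.
have [Gxty Gtxy] : G x (tau y) = false /\ G (tau x) y = false.
  by move: Wij; case: (G x _); case: (G (tau x) y).
rewrite (cross_edges_pairset _ Py Pc).
have /andP[-> ->] : G (tau y) c && G y (tau c).
  have := edges_triple_tau_ge2 (pairset_neq ij Px Pty) (pairset_neq ik Px Pc) (pairset_neq jk Pty Pc).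
  rewrite !tauK Gxty Gtxy (negbTE Gxc) (negbTE Gtxtc).
  by case: (G (tau y) c); case: (G y (tau c)).
have : G (tau y) (tau c) || G y c.
  have := edges_triple_tau_ge2 (pairset_neq ij Px Pty) (pairset_neq ik Px Ptc) (pairset_neq jk Pty Ptc).
  rewrite !tauK Gxty Gtxy.
  by move: Wik; case: (G x _); case: (G (tau x) _); case: (G (tau y) _); case: (G y c).
by case: (G y c); case: (G (tau y) (tau c)).
Qed.
End Triangle.

Theorem mainTheorem7 (m : nat) (Hm : (3 <= m)%N) (G : rel 'I_(m + m))
  (Gsym : symmetric G) (Girr : irreflexive G)
  (H3 : forall S : {set 'I_(m + m)}, #|S| = 3 ->
          (2 <= induced_edges G S + induced_edges G (@tau (m + m) @: S))%N) :
  (forall i j k : 'I_m, i != j -> i != k -> j != k ->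
     Wgraph G i j -> Wgraph G i k ->
     (3 <= cross_edges G (pairset j) (pairset k))%N)
  /\
  (forall i j k : 'I_m, ~ [&& Wgraph G i j, Wgraph G j k & Wgraph G i k]).
Proof.
split=> [i j k ij ik jk /andP[_ /eqP Wij] /andP[_ /eqP Wik] | i j k].
  exact: (cross_edges_ge3 Gsym Girr H3 ij ik jk Wij Wik).
case/and3P=> /andP[ij /eqP Wij] /andP[jk /eqP Wjk] /andP[ik /eqP Wik].
by have := cross_edges_ge3 Gsym Girr H3 ij ik jk Wij Wik; rewrite Wjk.
Qed.
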